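(* Assume the setting of the context. Fix $\widehat x^k$, $\delta_k>0$, points $x^1,\dots,x^{N_k}\in\mathcal{B}(\widehat x^k,\delta_k)$, realizations $\epsilon^1,\dots,\epsilon^{N_k}$ of $\tilde\epsilon$, and $\omega^i=\psi(x^i)+\epsilon^i$. Let $\widehat B^{k,1}\in\mathbb{R}^{n\times d}$, $\widehat B^{k,0}\in\mathbb{R}^{1\times d}$ be the least-squares coefficients, and let $$E_k:=\max_{z\in\mathcal{B}(\widehat x^k,\delta_k)}\big\|\psi(z)-(\widehat B^{k,1})^\top z-(\widehat B^{k,0})^\top\big\|.$$ For $x\in\mathcal{B}(\widehat x^k,\delta_k)$ define $y^{s,*}(x)=\arg\max_{y\in\mathcal{Y}}\frac1{N_k}\sum_{i}l(x,y,\psi(x)+\epsilon^i)$, $$\xi_k(x)=\frac1{N_k}\sum_{i}\nabla_y l(x,y^*(x),\psi(x)+\epsilon^i)-\mathbb{E}_{\tilde\epsilon}\big[\nabla_y l(x,y^*(x),\psi(x)+\tilde\epsilon)\big],$$ $$\tau_k(x)=\mathbb{E}_{\tilde\epsilon}\big[l(x,y^*(x),\psi(x)+\tilde\epsilon)\big]-\frac1{N_k}\sum_i l(x,y^*(x),\psi(x)+\epsilon^i).$$ Then for every $x\in\mathcal{B}(\widehat x^k,\delta_k)$: (a) $\|y^*(x)-y^{s,*}(x)\|\le\frac1\mu\|\xi_k(x)\|$; (b) $\|y^{k,*}(x)-y^{s,*}(x)\|\le\frac{2\ell_1}{\mu}E_k$; (c) $|\Phi(x)-\Phi^k(x)|\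le|\tau_k(x)|+\frac{L_1}{\mu}\|\xi_k(x)\|+2L_1\big(1+\frac{\ell_1}{\mu}\big)E_k$.
   Context: Standing assumptions: $l:\mathbb{R}^n\times\mathbb{R}^m\times\mathbb{R}^d\to\mathbb{R}$ is $\ell_1$-smooth (gradient $\ell_1$-Lipschitz) and $L_1$-Lipschitz; $\psi:\mathbb{R}^n\to\mathbb{R}^d$ is twice differentiable, $\ell_0$-smooth and $L_0$-Lipschitz; $\mathcal{Y}\subset\mathbb{R}^m$ is nonempty, closed, convex, bounded; $l(x,\cdot,z)$ is $\mu$-strongly concave on $\mathcal{Y}$ for all $(x,z)$; $\tilde\epsilon$ is a random vector in $\mathbb{R}^d$ with compact support and zero mean. $\mathcal{L}(x,y)=\mathbb{E}_{\tilde\epsilon}[l(x,y,\psi(x)+\tilde\epsilon)]$, $\Phi(x)=\max_{y\in\mathcal{Y}}\mathcal{L}(x,y)$, $y^*(x)=\arg\max_{y\in\mathcal{Y}}\mathcal{L}(x,y)$. $\mathcal{B}(x,\delta)=\{z:\|z-x\|\le\delta\}$. Least-squares coefficients: $(\widehat B^{k,0},\widehat B^{k,1})$ minimize $\sum_i\|\omega^i-(B^1)^\top x^i-(B^0)^\top\|^2$; residuals $e^{k,i}=\omega^i-(\widehat B^{k,1})^\top x^i-(\widehat B^{k,0})^\top$; $m_k(x,e)=(\widehat B^{k,1})^\top x+(\widehat B^{k,0})^\top+e$; $\mathcal{L}^k(x,y)=\frac1{N_k}\sum_i l(x,y,m_k(x,e^{k,i}))$; $\Phi^k(x)=\max_{y\in\mathcal{Y}}\mathcal{L}^k(x,y)$;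 $y^{k,*}(x)=\arg\max_{y\in\mathcal{Y}}\mathcal{L}^k(x,y)$. *)

From HB Require Import structures.
From mathcomp Require Import all_boot all_order all_algebra.
From mathcomp Require Import all_classical all_reals all_analysis.
Set Implicit Arguments. Unset Strict Implicit. Unset Printing Implicit Defensive.
Import Order.TTheory GRing.Theory Num.Theory.
Import numFieldNormedType.Exports.
Local Open Scope classical_set_scope.
Local Open Scope ring_scope.

(* Vectors of R^k are row vectors 'rV[R]_k; norms below are EUCLIDEAN. *)
Section Defs.
Variable R : realType.

Definition dotv k (u v : 'rV[R]_k) : R := \sum_(j < k) u 0 j * v 0 j.
Definition enorm k (u : 'rV[R]_k) : R := Num.sqrt (dotv u u).
Definition enorm3 n m d (x : 'rV[R]_n) (y : 'rV[R]_m) (z : 'rV[R]_d) : R :=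
  Num.sqrt (enorm x ^+ 2 + enorm y ^+ 2 + enorm z ^+ 2).

Definition eball k (c : 'rV[R]_k) (r : R) : set 'rV[R]_k :=
  [set z | enorm (z - c) <= r].

Definition grad k (f : 'rV[R]_k -> R) (a : 'rV[R]_k) : 'rV[R]_k :=
  \row_(j < k) derive f a (delta_mx 0 j).

Section L.
Variables (n m d : nat) (l : 'rV[R]_n -> 'rV[R]_m -> 'rV[R]_d -> R).
Definition gradX x y z := grad (fun x' => l x' y z) x.
Definition gradY x y z := grad (fun y' => l x y' z) y.
Definition gradZ x y z := grad (fun z' => l x y z') z.

Definition smooth_l (ell1 : R) :=
  (forall p : 'rV[R]_n * 'rV[R]_m * 'rV[R]_d,
      differentiable (fun q : 'rV[R]_n * 'rV[R]_m * 'rV[R]_d => l q.1.1 q.1.2 q.2) p) /\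
  (forall x y z x' y' z',
      enorm3 (gradX x y z - gradX x' y' z') (gradY x y z - gradY x' y' z')
             (gradZ x y z - gradZ x' y' z')
      <= ell1 * enorm3 (x - x') (y - y') (z - z')).

Definition lipschitz_l (L1 : R) :=
  forall x y z x' y' z', `|l x y z - l x' y' z'| <= L1 * enorm3 (x - x') (y - y') (z - z').

Definition strongly_concave_l (Y : set 'rV[R]_m) (mu : R) :=
  forall x z y1 y2 t, Y y1 -> Y y2 -> 0 <= t <= 1 ->
    t * l x y1 z + (1 - t) * l x y2 z + mu / 2 * t * (1 - t) * enorm (y1 - y2) ^+ 2
    <= l x (t *: y1 + (1 - t) *: y2) z.
End L.

Section Psi.
Variables (n d : nat) (psi : 'rV[R]_n -> 'rV[R]_d).
Definition twice_differentiable :=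
  (forall x, differentiable psi x) /\
  (forall (j : 'I_n) x, differentiable (fun x' => derive psi x' (delta_mx 0 j)) x).
Definition smooth_psi (ell0 : R) :=
  forall x x' h, enorm (derive psi x h - derive psi x' h) <= ell0 * enorm (x - x') * enorm h.
Definition lipschitz_psi (L0 : R) :=
  forall x x', enorm (psi x - psi x') <= L0 * enorm (x - x').
End Psi.

Definition is_argmax k (Y : set 'rV[R]_k) (f : 'rV[R]_k -> R) (y : 'rV[R]_k) :=
  Y y /\ forall y', Y y' -> f y' <= f y.

Section Prob.
Variables (dT : measure_display) (T : measurableType dT) (P : probability T R).
Definition Ex (f : T -> R) : R := Rintegral P setT f.
Definition Exv k (F : T -> 'rV[R]_k) : 'rV[R]_k := \row_(j < k) Ex (fun w => F w 0 j).

Definition random_vector_cs0 k (eps : T -> 'rV[R]_k) :=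
  (forall j : 'I_k, measurable_fun setT (fun w => eps w 0 j)) /\
  (exists K : set 'rV[R]_k, compact K /\ {ae P, forall w, K (eps w)}) /\
  (forall j : 'I_k, P.-integrable setT (fun w => (eps w 0 j)%:E) /\
                    Ex (fun w => eps w 0 j) = 0).
End Prob.

End Defs.

Section Problem.
Variable R : realType.
Variables (n m d : nat) (l : 'rV[R]_n -> 'rV[R]_m -> 'rV[R]_d -> R)
          (psi : 'rV[R]_n -> 'rV[R]_d) (Y : set 'rV[R]_m).

Definition Lpop dT (T : measurableType dT) (P : probability T R) (eps : T -> 'rV[R]_d)
  (x : 'rV[R]_n) (y : 'rV[R]_m) : R := Ex P (fun w => l x y (psi x + eps w)).
Definition Phi dT (T : measurableType dT) (P : probability T R) (eps : T -> 'rV[R]_d)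
  (x : 'rV[R]_n) : R := sup [set Lpop P eps x y | y in Y].

Variables (N : nat) (xs : 'I_N -> 'rV[R]_n) (es : 'I_N -> 'rV[R]_d).
Definition omega (i : 'I_N) : 'rV[R]_d := psi (xs i) + es i.
(* least-squares objective; row-vector convention: (B1^T x + B0^T)^T = x *m B1 + B0 *)
Definition lsq_obj (B0 : 'M[R]_(1, d)) (B1 : 'M[R]_(n, d)) : R :=
  \sum_(i < N) enorm (omega i - xs i *m B1 - B0) ^+ 2.
Definition is_lsq (B0 : 'M[R]_(1, d)) (B1 : 'M[R]_(n, d)) :=
  forall C0 C1, lsq_obj B0 B1 <= lsq_obj C0 C1.

Variables (B0 : 'M[R]_(1, d)) (B1 : 'M[R]_(n, d)).
Definition resid (i : 'I_N) : 'rV[R]_d := omega i - xs i *m B1 - B0.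
Definition mk (x : 'rV[R]_n) (e : 'rV[R]_d) : 'rV[R]_d := x *m B1 + B0 + e.
Definition Lk (x : 'rV[R]_n) (y : 'rV[R]_m) : R :=
  (N%:R)^-1 * \sum_(i < N) l x y (mk x (resid i)).
Definition Phik (x : 'rV[R]_n) : R := sup [set Lk x y | y in Y].
Definition Ls (x : 'rV[R]_n) (y : 'rV[R]_m) : R :=
  (N%:R)^-1 * \sum_(i < N) l x y (psi x + es i).
Definition Ek (xhat : 'rV[R]_n) (delta : R) : R :=
  sup [set enorm (psi z - z *m B1 - B0) | z in eball xhat delta].

Definition xi dT (T : measurableType dT) (P : probability T R) (eps : T -> 'rV[R]_d)
  (x : 'rV[R]_n) (ystar : 'rV[R]_m) : 'rV[R]_m :=
  (N%:R)^-1 *: \sum_(i < N) gradY l x ystar (psi x + es i)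
  - Exv P (fun w => gradY l x ystar (psi x + eps w)).
Definition tau dT (T : measurableType dT) (P : probability T R) (eps : T -> 'rV[R]_d)
  (x : 'rV[R]_n) (ystar : 'rV[R]_m) : R :=
  Lpop P eps x ystar - Ls x ystar.
End Problem.

(* For fixed x, each of the three objectives in y (the population one, the sample
   average with the true psi, and the sample average with the fitted linear model)
   has a Lipschitz y-gradient, hence a second-order Taylor bound, and the two
   sample averages are mu-strongly concave.  If F is mu-strongly concave with
   maximizer y1 and H has maximizer y2, then
     mu |y1 - y2|^2 <= <grad F(y2) - grad H(y2), y1 - y2>,
   which gives (a) with gradient gap xi, and (b) because the two sample objectives
   evaluate l at points at most 2 E_k apart.  Part (c) telescopes Phi - Phi^k
   through the sample objective at y*, y^s and y^k, using that l is L1-Lipschitz. *)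

From HB Require Import structures.
From mathcomp Require Import all_boot all_order all_algebra.
From mathcomp Require Import all_classical all_reals all_analysis.
From mathcomp Require Import ring lra measurable_realfun.
Import Order.TTheory GRing.Theory Num.Theory.
Import numFieldNormedType.Exports.
Local Open Scope classical_set_scope.
Local Open Scope ring_scope.
Set Implicit Arguments. Unset Strict Implicit. Unset Printing Implicit Defensive.

Section Euclid.
Variable R : realType.
Implicit Types (k : nat).

Lemma dotvC k (u v : 'rV[R]_k) : dotv u v = dotv v u.
Proof. by apply: eq_bigr => j _; rewrite mulrC. Qed.

Lemma dotvDl k (u v w : 'rV[R]_k) : dotv (u + v) w = dotv u w + dotv v w.
Proof. by rewrite /dotv -big_split; apply: eq_bigr => j _; rewrite mxE mulrDl. Qed.

Lemma dotvZl k a (u w : 'rV[R]_k) : dotv (a *: u) w = a * dotv u w.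
Proof. by rewrite /dotv mulr_sumr; apply: eq_bigr => j _; rewrite mxE mulrA. Qed.

Lemma dotvNl k (u w : 'rV[R]_k) : dotv (- u) w = - dotv u w.
Proof. by rewrite -scaleN1r dotvZl mulN1r. Qed.

Lemma dotvBl k (u v w : 'rV[R]_k) : dotv (u - v) w = dotv u w - dotv v w.
Proof. by rewrite dotvDl dotvNl. Qed.

Lemma dotvDr k (u v w : 'rV[R]_k) : dotv w (u + v) = dotv w u + dotv w v.
Proof. by rewrite dotvC dotvDl !(dotvC w). Qed.

Lemma dotvZr k a (u w : 'rV[R]_k) : dotv w (a *: u) = a * dotv w u.
Proof. by rewrite dotvC dotvZl dotvC. Qed.

Lemma dotvNr k (u w : 'rV[R]_k) : dotv w (- u) = - dotv w u.
Proof. by rewrite dotvC dotvNl dotvC. Qed.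

Lemma dotvBr k (u v w : 'rV[R]_k) : dotv w (u - v) = dotv w u - dotv w v.
Proof. by rewrite dotvDr dotvNr. Qed.

Lemma dotv0l k (w : 'rV[R]_k) : dotv 0 w = 0.
Proof. by rewrite -(scale0r (0 : 'rV[R]_k)) dotvZl mul0r. Qed.

Lemma dotv_suml k N (u : 'I_N -> 'rV[R]_k) w :
  dotv (\sum_(i < N) u i) w = \sum_(i < N) dotv (u i) w.
Proof.
elim/big_ind2: _ => //; first by rewrite dotv0l.
by move=> a b c e <- <-; rewrite dotvDl.
Qed.

Lemma dotvv_ge0 k (u : 'rV[R]_k) : 0 <= dotv u u.
Proof. by apply: sumr_ge0 => j _; rewrite -expr2 sqr_ge0. Qed.

Lemma enorm_ge0 k (u : 'rV[R]_k) : 0 <= enorm u.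
Proof. exact: sqrtr_ge0. Qed.

Lemma enorm_sqr k (u : 'rV[R]_k) : enorm u ^+ 2 = dotv u u.
Proof. by rewrite /enorm sqr_sqrtr // dotvv_ge0. Qed.

Lemma enorm0 k : enorm (0 : 'rV[R]_k) = 0.
Proof. by rewrite /enorm dotv0l sqrtr0. Qed.

Lemma enorm_eq0 k (u : 'rV[R]_k) : enorm u = 0 -> u = 0.
Proof.
move=> u0; apply/rowP => j; rewrite mxE.
have uu0 : dotv u u = 0 by rewrite -enorm_sqr u0 expr0n.
have sq_ge0 (i : 'I_k) : true -> 0 <= u 0 i * u 0 i by rewrite -expr2 sqr_ge0.
have /eqP := psumr_eq0P sq_ge0 uu0 (i := j) isT.
by rewrite mulf_eq0 orbb => /eqP.
Qed.

Lemma enormN k (u : 'rV[R]_k) : enorm (- u) = enorm u.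
Proof. by rewrite /enorm dotvNl dotvNr opprK. Qed.

Lemma enorm_distC k (u v : 'rV[R]_k) : enorm (u - v) = enorm (v - u).
Proof. by rewrite -enormN opprB. Qed.

Lemma enormZ k a (u : 'rV[R]_k) : enorm (a *: u) = `|a| * enorm u.
Proof. by rewrite /enorm dotvZl dotvZr mulrA -expr2 sqrtrM ?sqr_ge0 // sqrtr_sqr. Qed.

Lemma dotv_le k (u v : 'rV[R]_k) : dotv u v <= enorm u * enorm v.
Proof.
have [->|u0] := eqVneq u 0; first by rewrite dotv0l enorm0 mul0r.
have [->|v0] := eqVneq v 0; first by rewrite dotvC dotv0l enorm0 mulr0.
have a0 : 0 < enorm u by rewrite lt_def enorm_ge0 andbT; apply: contra_neq u0; exact: enorm_eq0.
have b0 : 0 < enorm v by rewrite lt_def enorm_ge0 andbT; apply: contra_neq v0; exact: enorm_eq0.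
(* expand [0 <= |b u - a v|^2] with [a = |u|], [b = |v|] *)
have := dotvv_ge0 (enorm v *: u - enorm u *: v).
rewrite !(dotvBl, dotvBr, dotvZl, dotvZr) -!enorm_sqr (dotvC v u).
set a := enorm u; set b := enorm v; set D := dotv u v => h.
have ab0 : 0 < a * b by exact: mulr_gt0.
suff : 0 <= (a * b) * (a * b - D) by rewrite pmulr_rge0 // subr_ge0.
have -> : (a * b) * (a * b - D) = (b * (b * a ^+ 2 - a * D) - a * (b * D - a * b ^+ 2)) / 2.
  by field.
by apply: divr_ge0.
Qed.

Lemma normr_dotv_le k (u v : 'rV[R]_k) : `|dotv u v| <= enorm u * enorm v.
Proof.
rewrite ler_norml dotv_le andbT.
by have := dotv_le (- u) v; rewrite dotvNl enormN lerNl.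
Qed.

Lemma ler_enormD k (u v : 'rV[R]_k) : enorm (u + v) <= enorm u + enorm v.
Proof.
rewrite {1}/enorm -(ger0_norm (addr_ge0 (enorm_ge0 u) (enorm_ge0 v))) -sqrtr_sqr.
apply: ler_wsqrtr; rewrite !(dotvDl, dotvDr) -!enorm_sqr (dotvC v u).
have := dotv_le u v; set a := enorm u; set b := enorm v; set D := dotv u v.
nra.
Qed.

Lemma ler_enormB k (u v : 'rV[R]_k) : enorm (u - v) <= enorm u + enorm v.
Proof. by rewrite -(enormN v); exact: ler_enormD. Qed.

Lemma ler_enorm_sum k N (u : 'I_N -> 'rV[R]_k) :
  enorm (\sum_(i < N) u i) <= \sum_(i < N) enorm (u i).
Proof.
elim/big_ind2: _ => //; first by rewrite enorm0.
by move=> a b c e h1 h2; apply: (le_trans (ler_enormD _ _)); exact: lerD.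
Qed.

Lemma enorm_le_sum_abs k (u : 'rV[R]_k) : enorm u <= \sum_(j < k) `|u 0 j|.
Proof.
rewrite {1}(row_sum_delta u); apply: le_trans; first exact: ler_enorm_sum.
apply: ler_sum => j _; rewrite enormZ.
suff -> : enorm (delta_mx 0 j : 'rV[R]_k) = 1 by rewrite mulr1.
rewrite /enorm /dotv (bigD1 j) //= big1 ?addr0; first by rewrite !mxE !eqxx mulr1 sqrtr1.
by move=> i ij; rewrite !mxE eqxx /= (negbTE ij) mulr0.
Qed.

Lemma abs_le_enorm k (u : 'rV[R]_k) j : `|u 0 j| <= enorm u.
Proof.
rewrite /enorm -sqrtr_sqr; apply: ler_wsqrtr.
rewrite /dotv (bigD1 j) //= expr2 lerDl.
by apply: sumr_ge0 => i _; rewrite -expr2 sqr_ge0.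
Qed.

Lemma rV_eq0_of_neg_bound k (c : R) :
  c < 0 -> (forall u : 'rV[R]_k, 0 <= c * enorm u) -> forall u : 'rV[R]_k, u = 0.
Proof.
move=> c0 hc u; apply: enorm_eq0; apply/le_anti.
by rewrite enorm_ge0 andbT -(nmulr_rge0 _ c0).
Qed.

Lemma enorm_le_enorm3 n m d (x : 'rV[R]_n) (y : 'rV[R]_m) (z : 'rV[R]_d) :
  enorm y <= enorm3 x y z.
Proof.
rewrite /enorm3 -[X in X <= _](ger0_norm (enorm_ge0 y)) -sqrtr_sqr; apply: ler_wsqrtr.
have := sqr_ge0 (enorm x); have := sqr_ge0 (enorm z); lra.
Qed.

Lemma enorm3_0y0 n m d (y : 'rV[R]_m) :
  enorm3 (0 : 'rV[R]_n) y (0 : 'rV[R]_d) = enorm y.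
Proof. by rewrite /enorm3 !enorm0 expr0n /= add0r addr0 sqrtr_sqr ger0_norm // enorm_ge0. Qed.

Lemma enorm3_00z n m d (z : 'rV[R]_d) :
  enorm3 (0 : 'rV[R]_n) (0 : 'rV[R]_m) z = enorm z.
Proof. by rewrite /enorm3 !enorm0 expr0n /= !add0r sqrtr_sqr ger0_norm // enorm_ge0. Qed.

End Euclid.

Section ConcaveMax.
Variables (R : realType) (m : nat) (Y : set 'rV[R]_m).

Definition taylor_bounded (F : 'rV[R]_m -> R) (G : 'rV[R]_m -> 'rV[R]_m) (c : R) :=
  forall y h t, 0 <= t ->
  `|F (y + t *: h) - F y - t * dotv (G y) h| <= c * t ^+ 2 * enorm h ^+ 2.

Definition strongly_concave_on (mu : R) (F : 'rV[R]_m -> R) :=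
  forall y1 y2 t, Y y1 -> Y y2 -> 0 <= t <= 1 ->
  t * F y1 + (1 - t) * F y2 + mu / 2 * t * (1 - t) * enorm (y1 - y2) ^+ 2
    <= F (t *: y1 + (1 - t) *: y2).

Lemma le_of_le_addr_small (a b c : R) : (forall t, 0 < t < 1 -> a <= b + c * t) -> a <= b.
Proof.
move=> H; rewrite leNgt; apply/negP => ba.
set e := a - b; have e0 : 0 < e by rewrite subr_gt0.
have ce : 0 < `|c| + e by apply: ltr_wpDl.
set t := e / (2 * (`|c| + e)).
have t0 : 0 < t by apply: divr_gt0 => //; apply: mulr_gt0.
have t1 : t < 1 by rewrite ltr_pdivrMr ?mulr_gt0 //; have := normr_ge0 c; lra.
have := H t; rewrite t0 t1 => /(_ isT) h.
have : c * t <= `|c| * t by apply: ler_wpM2r; [exact: ltW | exact: ler_norm].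
have : `|c| * t <= e / 2.
  rewrite /t mulrA ler_pdivrMr ?mulr_gt0 //.
  have -> : e / 2 * (2 * (`|c| + e)) = e * (`|c| + e) by field.
  have := normr_ge0 c; nra.
rewrite /e in e0 *; lra.
Qed.

Lemma convex_set_comb (a b : 'rV[R]_m) (t : R) : convex_set Y ->
  Y a -> Y b -> 0 <= t <= 1 -> Y (t *: a + (1 - t) *: b).
Proof.
move=> cY Ya Yb /andP[t0 t1].
by have := cY a b (Itv01 t0 t1) (mem_set Ya) (mem_set Yb); rewrite inE.
Qed.

Variables (F : 'rV[R]_m -> R) (G : 'rV[R]_m -> 'rV[R]_m) (c mu : R).
Hypotheses (cY : convex_set Y) (FG : taylor_bounded F G c).

Lemma argmax_first_order ys y : is_argmax Y F ys -> Y y -> dotv (G ys) (y - ys) <= 0.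
Proof.
move=> [Yys ys_max] Yy; set h := y - ys.
apply: (@le_of_le_addr_small _ 0 (c * enorm h ^+ 2)) => t /andP[t0 t1].
have Yt : Y (ys + t *: h).
  have -> : ys + t *: h = t *: y + (1 - t) *: ys by apply/rowP => j; rewrite !mxE; ring.
  by apply: convex_set_comb => //; rewrite (ltW t0) (ltW t1).
have := ys_max _ Yt; have /ler_normlP[+ _] := FG ys h (ltW t0).
set A := F _; set B := F ys; set C := dotv _ _; set E := enorm h ^+ 2 => h1 h2.
suff : t * C <= t * (c * E * t) by rewrite ler_pM2l // add0r mulrC mulrA.
have -> : t * (c * E * t) = c * t ^+ 2 * E by ring.
lra.
Qed.

Hypothesis F_sc : strongly_concave_on mu F.

(* Strong concavity along the chord gives [F ys - F y >= mu/2 |ys - y|^2]; the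
   Taylor bound at [y] gives [<G y, ys - y> >= F ys - F y + mu/2 |ys - y|^2]. *)
Lemma argmax_strong_concave ys y : is_argmax Y F ys -> Y y ->
  mu * enorm (ys - y) ^+ 2 <= dotv (G y) (ys - y).
Proof.
move=> [Yys ys_max] Yy; set h := ys - y.
set K := mu / 2 * enorm h ^+ 2; set D := F ys - F y.
have chordE t : t *: ys + (1 - t) *: y = y + t *: h.
  by apply/rowP => j; rewrite !mxE; ring.
have KD : K <= D.
  apply: (@le_of_le_addr_small _ _ K) => s /andP[s0 s1].
  have t01 : 0 <= 1 - s <= 1 by apply/andP; split; lra.
  have := F_sc Yys Yy t01; have := ys_max _ (convex_set_comb cY Yys Yy t01).
  rewrite -/h; set A := F _ => hA hS.
  suff : s * (K * (1 - s) - D) <= s * 0 by rewrite ler_pM2l //; nra.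
  have -> : s * (K * (1 - s) - D) =
    (1 - s) * F ys + (1 - (1 - s)) * F y + mu / 2 * (1 - s) * (1 - (1 - s)) * enorm h ^+ 2
    - F ys by rewrite /K /D; ring.
  lra.
suff : D + K <= dotv (G y) h.
  have -> : mu * enorm h ^+ 2 = K + K by rewrite /K; field.
  lra.
apply: (@le_of_le_addr_small _ _ (K + c * enorm h ^+ 2)) => t /andP[t0 t1].
have t01 : 0 <= t <= 1 by rewrite (ltW t0) (ltW t1).
have := F_sc Yys Yy t01; have /ler_normlP[_] := FG y h (ltW t0).
rewrite -chordE -/h; set A := F _ => hT hS.
suff : t * (D + K) <= t * (dotv (G y) h + (K + c * enorm h ^+ 2) * t) by rewrite ler_pM2l.
have -> : t * (D + K) = t * F ys + (1 - t) * F y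
    + mu / 2 * t * (1 - t) * enorm h ^+ 2 - F y + K * t ^+ 2 by rewrite /K /D; ring.
have -> : t * (dotv (G y) h + (K + c * enorm h ^+ 2) * t) =
    t * dotv (G y) h + c * t ^+ 2 * enorm h ^+ 2 + K * t ^+ 2 by ring.
lra.
Qed.

End ConcaveMax.

(* Strong concavity of [F] at [y1] plus the first-order condition of [H] at [y2],
   then Cauchy-Schwarz. *)
Lemma argmax_dist_le (R : realType) m (Y : set 'rV[R]_m) (F H : 'rV[R]_m -> R)
    (G GH : 'rV[R]_m -> 'rV[R]_m) c c' mu y1 y2 :
  convex_set Y -> taylor_bounded F G c -> strongly_concave_on Y mu F ->
  taylor_bounded H GH c' -> is_argmax Y F y1 -> is_argmax Y H y2 ->
  mu * enorm (y1 - y2) <= enorm (G y2 - GH y2).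
Proof.
move=> cY FG F_sc HG y1_max y2_max.
have sc := argmax_strong_concave cY FG F_sc y1_max y2_max.1.
have fo := argmax_first_order cY HG y2_max y1_max.1.
have cs := dotv_le (G y2 - GH y2) (y1 - y2); rewrite dotvBl in cs.
have [->|y12] := eqVneq (y1 - y2) 0; first by rewrite enorm0 mulr0 enorm_ge0.
have a0 : 0 < enorm (y1 - y2).
  by rewrite lt_def enorm_ge0 andbT; apply: contra_neq y12; exact: enorm_eq0.
rewrite -(ler_pM2r a0) -mulrA -expr2; lra.
Qed.

Section TaylorY.
Variables (R : realType) (n m d : nat) (l : 'rV[R]_n -> 'rV[R]_m -> 'rV[R]_d -> R).
Hypothesis l_diff : forall p : 'rV[R]_n * 'rV[R]_m * 'rV[R]_d,
  differentiable (fun q : 'rV[R]_n * 'rV[R]_m * 'rV[R]_d => l q.1.1 q.1.2 q.2) p.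
Variables (x : 'rV[R]_n) (z : 'rV[R]_d).

Lemma differentiable_lY y : differentiable (fun y' => l x y' z) y.
Proof.
have -> : (fun y' => l x y' z) =
  (fun q : 'rV[R]_n * 'rV[R]_m * 'rV[R]_d => l q.1.1 q.1.2 q.2) \o
  (fun y' => ((x, id y'), z)) by [].
apply: differentiable_comp; last exact: l_diff.
by apply: differentiable_pair => //; exact: differentiable_pair.
Qed.

Lemma deriveY_dotv y h : derive (fun y' => l x y' z) y h = dotv (gradY l x y z) h.
Proof.
rewrite deriveE; last exact: differentiable_lY.
rewrite {1}(row_sum_delta h) linear_sum /dotv; apply: eq_bigr => j _.
rewrite linearZ /= mxE -deriveE; last exact: differentiable_lY.
by rewrite mulrC.
Qed.

Lemma line_quotientE (y h : 'rV[R]_m) (t : R) :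
  (fun s : R => s^-1 *: (((fun t' : R => l x (y + t' *: h) z) \o shift t) (s *: 1)
                 - l x (y + t *: h) z)) =
  (fun s : R => s^-1 *: (((fun y' => l x y' z) \o shift (y + t *: h)) (s *: h)
                 - l x (y + t *: h) z)).
Proof.
apply: funext => s /=; congr (_ *: (l x _ z - _)).
by rewrite [s%:A]mulr1 scalerDl addrCA.
Qed.

Lemma line_derivable (y h : 'rV[R]_m) (t : R) :
  derivable (fun t' : R => l x (y + t' *: h) z) t 1.
Proof.
have := @diff_derivable _ _ _ _ _ h (differentiable_lY (y + t *: h)).
by rewrite /derivable line_quotientE.
Qed.

Lemma line_is_derive (y h : 'rV[R]_m) (t : R) :
  is_derive t 1 (fun t' : R => l x (y + t' *: h) z) (dotv (gradY l x (y + t *: h) z) h).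
Proof.
have -> : dotv (gradY l x (y + t *: h) z) h = derive (fun t' : R => l x (y + t' *: h) z) t 1.
  by rewrite -deriveY_dotv /derive line_quotientE.
exact/derivableP/line_derivable.
Qed.

(* Mean value theorem on the segment [y, y + t h], then the Lipschitz gradient. *)
Lemma taylor_gradY c : 0 <= c ->
  (forall y y', enorm (gradY l x y z - gradY l x y' z) <= c * enorm (y - y')) ->
  taylor_bounded (fun y => l x y z) (fun y => gradY l x y z) c.
Proof.
move=> c0 grad_lip y h t t0.
pose f t' := l x (y + t' *: h) z.
have f_cont : {within `[0, t], continuous f}.
  by apply: derivable_within_continuous => s _; exact: line_derivable.
have [s s_in fE] := MVT_segment t0 (fun s _ => line_is_derive y h s) f_cont.
move: s_in; rewrite in_itv /= => /andP[s0 st].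
have -> : l x (y + t *: h) z - l x y z - t * dotv (gradY l x y z) h =
          t * dotv (gradY l x (y + s *: h) z - gradY l x y z) h.
  have f0 : f 0 = l x y z by rewrite /f scale0r addr0.
  by rewrite -f0 -/(f t) fE subr0 dotvBl mulrBr mulrC.
rewrite normrM (ger0_norm t0).
set g := gradY l x (y + s *: h) z - gradY l x y z.
have g_le : enorm g <= c * t * enorm h.
  have := grad_lip (y + s *: h) y.
  rewrite addrAC subrr add0r enormZ (ger0_norm s0) => /le_trans; apply.
  by rewrite -mulrA; apply: ler_wpM2l => //; apply: ler_wpM2r => //; exact: enorm_ge0.
have -> : c * t ^+ 2 * enorm h ^+ 2 = t * (c * t * enorm h * enorm h) by ring.
apply: ler_wpM2l => //; apply: (le_trans (normr_dotv_le g h)).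
by apply: ler_wpM2r => //; exact: enorm_ge0.
Qed.

End TaylorY.

Section Average.
Variables (R : realType) (N : nat).
Implicit Types (a b : 'I_N -> R).

Definition avgr a : R := N%:R^-1 * \sum_(i < N) a i.
Definition avgv k (u : 'I_N -> 'rV[R]_k) : 'rV[R]_k := N%:R^-1 *: \sum_(i < N) u i.

Lemma avgrB a b : avgr a - avgr b = avgr (fun i => a i - b i).
Proof. by rewrite /avgr -mulrBr sumrB. Qed.

Lemma mulr_avgr (c : R) a : c * avgr a = avgr (fun i => c * a i).
Proof. by rewrite /avgr mulrCA mulr_sumr. Qed.

Lemma avgvB k (u v : 'I_N -> 'rV[R]_k) : avgv u - avgv v = avgv (fun i => u i - v i).
Proof. by rewrite /avgv -scalerBr sumrB. Qed.

Lemma dotv_avgv k (u : 'I_N -> 'rV[R]_k) h :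
  dotv (avgv u) h = avgr (fun i => dotv (u i) h).
Proof. by rewrite /avgv dotvZl dotv_suml. Qed.

Hypothesis N_gt0 : (0 < N)%N.

Lemma avgr_cst (c : R) : avgr (fun _ => c) = c.
Proof.
rewrite /avgr sumr_const card_ord -[c *+ N]mulr_natr mulrCA mulVf ?mulr1 //.
by rewrite pnatr_eq0 -lt0n.
Qed.

Lemma normr_avgr_le a (c : R) : (forall i, `|a i| <= c) -> `|avgr a| <= c.
Proof.
move=> ac; rewrite -(avgr_cst c) /avgr normrM ger0_norm ?invr_ge0 ?ler0n //.
rewrite ler_wpM2l ?invr_ge0 ?ler0n //.
by apply: (le_trans (ler_norm_sum _ _ _)); exact: ler_sum.
Qed.

Lemma enorm_avgv_le k (u : 'I_N -> 'rV[R]_k) (c : R) :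
  (forall i, enorm (u i) <= c) -> enorm (avgv u) <= c.
Proof.
move=> uc; rewrite enormZ ger0_norm ?invr_ge0 ?ler0n // -(avgr_cst c).
rewrite ler_wpM2l ?invr_ge0 ?ler0n //.
by apply: (le_trans (ler_enorm_sum _)); exact: ler_sum.
Qed.

Variable (m : nat).
Implicit Types (f : 'I_N -> 'rV[R]_m -> R) (g : 'I_N -> 'rV[R]_m -> 'rV[R]_m).

Lemma taylor_avgr f g c : (forall i, taylor_bounded (f i) (g i) c) ->
  taylor_bounded (fun y => avgr (f^~ y)) (fun y => avgv (g^~ y)) c.
Proof.
move=> fg y h t t0; rewrite dotv_avgv mulr_avgr !avgrB.
by apply: normr_avgr_le => i; exact: fg.
Qed.

Lemma strongly_concave_avgr (Y : set 'rV[R]_m) mu f :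
  (forall i, strongly_concave_on Y mu (f i)) ->
  strongly_concave_on Y mu (fun y => avgr (f^~ y)).
Proof.
move=> f_sc y1 y2 t Y1 Y2 t01.
set K := mu / 2 * t * (1 - t) * enorm (y1 - y2) ^+ 2.
rewrite -(avgr_cst K) /avgr !mulrA (mulrC t) (mulrC (1 - t)) -!mulrA -!mulrDr.
rewrite ler_wpM2l ?invr_ge0 ?ler0n // !mulr_sumr -!big_split /=.
by apply: ler_sum => i _; exact: f_sc.
Qed.

End Average.

Section Expectation.
Variables (R : realType) (dT : measure_display) (T : measurableType dT)
  (P : probability T R).
Local Notation integrable f := (P.-integrable setT (EFin \o f)).
Implicit Types (f g : T -> R).

Lemma integrableB_fun f g : integrable f -> integrable g -> integrable (fun w => f w - g w).
Proof.
move=> fi gi; have := integrableB measurableT fi gi.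
by apply: eq_integrable => // w _ /=; rewrite EFinB.
Qed.

Lemma integrableZ_fun (c : R) f : integrable f -> integrable (fun w => c * f w).
Proof.
move=> fi; have := integrableZl measurableT c fi.
by apply: eq_integrable => // w _ /=; rewrite EFinM.
Qed.

Lemma integrable_sum_fun k (f : 'I_k -> T -> R) :
  (forall j, integrable (f j)) -> integrable (fun w => \sum_(j < k) f j w).
Proof.
move=> fi; have := integrable_sum measurableT (index_enum 'I_k) (P := xpredT)
  (h := fun j => EFin \o f j) (fun j _ => fi j).
by apply: eq_integrable => // w _ /=; rewrite sumEFin.
Qed.

Lemma ExB f g : integrable f -> integrable g -> Ex P (fun w => f w - g w) = Ex P f - Ex P g.
Proof. by move=> fi gi; rewrite /Ex RintegralB. Qed.

Lemma ExZ (c : R) f : integrable f -> Ex P (fun w => c * f w) = c * Ex P f.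
Proof. by move=> fi; rewrite /Ex RintegralZl. Qed.

Lemma Ex_cst (c : R) : Ex P (fun _ => c) = c.
Proof.
rewrite /Ex Rintegral_cst //; set PT := (X in c * fine X).
by rewrite (_ : PT = 1%E) ?mulr1 // /PT -(probability_setT P).
Qed.

Lemma Ex_sum k (f : 'I_k -> T -> R) : (forall j, integrable (f j)) ->
  Ex P (fun w => \sum_(j < k) f j w) = \sum_(j < k) Ex P (f j).
Proof.
elim: k f => [|k IH] f fi.
  by rewrite big_ord0; under eq_fun => w do rewrite big_ord0; rewrite Ex_cst.
rewrite big_ord_recl; under eq_fun => w do rewrite big_ord_recl.
rewrite /Ex RintegralD //; last exact: integrable_sum_fun.
by rewrite -IH.
Qed.

Lemma normr_Ex_le f (c : R) : integrable f -> (forall w, `|f w| <= c) -> `|Ex P f| <= c.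
Proof.
move=> fi fc; apply: (le_trans (le_normr_Rintegral measurableT fi)).
rewrite -[leRHS](Ex_cst c); apply: le_Rintegral => //.
- exact: integrable_norm.
- exact: finite_measure_integrable_cst.
Qed.

Lemma dotv_Exv k (F : T -> 'rV[R]_k) h : (forall j, integrable (fun w => F w 0 j)) ->
  dotv (Exv P F) h = Ex P (fun w => dotv (F w) h).
Proof.
move=> Fi; rewrite /dotv Ex_sum; last first.
  by move=> j; under eq_fun do rewrite mulrC; exact: integrableZ_fun.
apply: eq_bigr => j _; rewrite mxE mulrC -ExZ //.
by congr Ex; apply: funext => w; rewrite mulrC.
Qed.

Variable (m : nat).
Implicit Types (F : T -> 'rV[R]_m -> R) (G : T -> 'rV[R]_m -> 'rV[R]_m).

Lemma taylor_Ex F G c :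
  (forall y, integrable (F^~ y)) -> (forall y j, integrable (fun w => G w y 0 j)) ->
  (forall w, taylor_bounded (F w) (G w) c) ->
  taylor_bounded (fun y => Ex P (F^~ y)) (fun y => Exv P (G^~ y)) c.
Proof.
move=> Fi Gi FG y h t t0.
have dGi : integrable (fun w => dotv (G w y) h).
  by apply: integrable_sum_fun => j; under eq_fun do rewrite mulrC; exact: integrableZ_fun.
rewrite dotv_Exv // -ExZ // -!ExB //; last 2 first.
- exact: integrableB_fun.
- exact: integrableZ_fun.
apply: normr_Ex_le => [|w]; last exact: FG.
by apply: integrableB_fun; [exact: integrableB_fun | exact: integrableZ_fun].
Qed.

End Expectation.

Section LipschitzOfRandomVector.
Variables (R : realType) (dT : measure_display) (T : measurableType dT)
  (P : probability T R) (d : nat) (eps : T -> 'rV[R]_d).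
Hypothesis eps_meas : forall j : 'I_d, measurable_fun setT (fun w => eps w 0 j).
Hypothesis eps_bounded : exists K : set 'rV[R]_d, compact K /\ {ae P, forall w, K (eps w)}.

(* Countably many, and every open set is a union of them. *)
Definition rat_cube (qs : 'rV[rat]_d * rat) : set 'rV[R]_d :=
  [set u | forall j, `|u 0 j - ratr (qs.1 0 j)| < ratr qs.2].

Lemma measurable_preimage_rat_cube qs : measurable (eps @^-1` rat_cube qs).
Proof.
pose B (k : nat) : set T := if (insub k : option 'I_d) is Some j then
  (fun w => eps w 0 j) @^-1`
     `](ratr (qs.1 0 j) - ratr qs.2), (ratr (qs.1 0 j) + ratr qs.2)[%classic
  else setT.
have -> : eps @^-1` rat_cube qs = \bigcap_(k in setT) B k.
  apply/seteqP; split => w /=.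
    move=> hw k _; rewrite /B; case: insubP => // j _ _ /=.
    by rewrite in_itv /=; have := hw j; rewrite ltr_norml => /andP[h1 h2]; apply/andP; split; lra.
  move=> hw j; have := hw (val j) I; rewrite /B valK /= in_itv /=.
  by rewrite ltr_norml => /andP[h1 h2]; apply/andP; split; lra.
apply: bigcap_measurableType => k _; rewrite /B; case: insubP => // j _ _.
by rewrite -[X in measurable X]setTI; apply: eps_meas => //; exact: measurable_itv.
Qed.

Lemma measurable_preimage_open (O : set 'rV[R]_d) :
  (forall p, O p -> exists2 e, 0 < e &
     forall u : 'rV[R]_d, (forall j, `|u 0 j - p 0 j| < e) -> O u) ->
  measurable (eps @^-1` O).
Proof.
move=> O_open.
pose F (qs : 'rV[rat]_d * rat) : set T :=
  if pselect (rat_cube qs `<=` O) then eps @^-1` rat_cube qs else set0.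
have -> : eps @^-1` O = \bigcup_qs F qs.
  apply/seteqP; split => w /=; last first.
    by move=> [qs _]; rewrite /F; case: pselect => // sub /sub.
  move=> /O_open[e e0 cubeO].
  have [s] := @rat_in_itvoo R 0 (e / 2) ltac:(by apply: divr_gt0).
  rewrite in_itv /= => /andP[s0 s1].
  have near_q (j : 'I_d) : exists q : rat,
      ratr q \in `](eps w 0 j - ratr s), (eps w 0 j + ratr s)[.
    by apply: rat_in_itvoo; lra.
  have [q qE] := choice near_q.
  exists (\row_j q j, s) => //.
  have sub : rat_cube (\row_j q j, s) `<=` O.
    move=> u /= hu; apply: cubeO => j; have := hu j; have := qE j.
    rewrite mxE in_itv /= => /andP[h1 h2]; rewrite !ltr_norml => /andP[h3 h4].
    by apply/andP; split; lra.
  rewrite /F; case: pselect => // _ /= j; have := qE j.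
  by rewrite mxE in_itv /= ltr_norml => /andP[h1 h2]; apply/andP; split; lra.
apply: (@countable_bigcupT_measurable _ _ ('rV[rat]_d * rat)%type F); first exact: countableP.
move=> qs; rewrite /F; case: pselect => ?.
  exact: measurable_preimage_rat_cube.
exact: measurable0.
Qed.

Variables (F : 'rV[R]_d -> R) (C : R).
Hypothesis F_lip : forall u v, `|F u - F v| <= C * enorm (u - v).

Lemma measurable_fun_lipschitz : measurable_fun setT (fun w => F (eps w)).
Proof.
apply: (measurability _ (measurable_realfun.RGenOpens.measurableE R)).
move=> _ [_ [a [b ->]] <-]; rewrite setTI.
apply: (measurable_preimage_open (O := F @^-1` `]a, b[%classic)) => p /=.
rewrite in_itv /= => /andP[ap pb].
set r := Num.min (F p - a) (b - F p).
have r0 : 0 < r by rewrite lt_min !subr_gt0 ap pb.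
have K0 : 0 < (`|C| + 1) * (d%:R + 1) by apply: mulr_gt0; apply: ltr_wpDl.
set e := r / ((`|C| + 1) * (d%:R + 1)).
have e0 : 0 < e by apply: divr_gt0.
exists e => // u hu.
have sum_le : \sum_(j < d) `|u 0 j - p 0 j| <= d%:R * e.
  rewrite mulr_natl -[X in _ <= e *+ X](card_ord d) -sumr_const.
  by apply: ler_sum => j _; exact/ltW/hu.
have Fup : `|F u - F p| <= `|C| * (d%:R * e).
  apply: (le_trans (F_lip u p)); apply: (le_trans (ler_wpM2r (enorm_ge0 _) (ler_norm C))).
  apply: ler_wpM2l => //; apply: (le_trans (enorm_le_sum_abs _)).
  by apply: (le_trans _ sum_le); apply: ler_sum => j _; rewrite !mxE.
have Cde : `|C| * (d%:R * e) < r.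
  rewrite (_ : r = (`|C| + 1) * (d%:R + 1) * e); last by rewrite /e mulrC divfK // gt_eqF.
  have := normr_ge0 C; have : 0 <= (d%:R : R) := ler0n _ _.
  by rewrite mulrA ltr_pM2r //; nra.
have ra : r <= F p - a by rewrite /r ge_min lexx.
have rb : r <= b - F p by rewrite /r ge_min lexx orbT.
move: Fup; rewrite ler_norml in_itv /= => /andP[h1 h2]; apply/andP; split; lra.
Qed.

Lemma integrable_lipschitz : P.-integrable setT (EFin \o (fun w => F (eps w))).
Proof.
have [K [K_compact K_ae]] := eps_bounded.
have [M [_ MK]] := compact_bounded K_compact.
set M1 := Num.max M 0 + 1.
have M10 : 0 <= M1 by rewrite addr_ge0 // le_max lexx orbT.
have entry_le v j : K v -> `|v 0 j| <= M1.
  move=> Kv; apply: le_trans (MK M1 _ v Kv).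
    rewrite [leRHS]/Num.norm /= mx_normrE.
    exact: (le_bigmax _ (fun ij : 'I_1 * 'I_d => `|v ij.1 ij.2|) (0, j)).
  by apply: (le_lt_trans (y := Num.max M 0)); rewrite ?le_max ?lexx // ltrDl.
set B := `|F 0| + `|C| * (d%:R * M1).
have F_le v : K v -> `|F v| <= B.
  move=> Kv; have enorm_le : enorm v <= d%:R * M1.
    apply: (le_trans (enorm_le_sum_abs _)).
    rewrite mulr_natl -[X in _ <= M1 *+ X](card_ord d) -sumr_const.
    by apply: ler_sum => j _; exact: entry_le.
  rewrite -[F v](subrK (F 0)) addrC; apply: (le_trans (ler_normD _ _)); rewrite lerD2l.
  have := F_lip v 0; rewrite subr0 => /le_trans; apply.
  by apply: (le_trans (ler_wpM2r (enorm_ge0 _) (ler_norm C))); exact: ler_wpM2l.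
have B0 : 0 <= B by rewrite addr_ge0 // !mulr_ge0.
have F_meas := measurable_fun_lipschitz.
apply/integrableP; split; first exact/measurable_EFinP.
apply: (le_lt_trans (@integral_le_bound _ _ _ _ _ _ B%:E _ _ _ _)) => //.
- by apply: measurableT_comp => //; exact/measurable_EFinP.
- by apply: filterS K_ae => w Kw _ /=; rewrite lee_fin; exact: F_le.
- set PT := (X in (_ * X < _)%E).
  by rewrite (_ : PT = 1%E) ?mule1 ?ltry // /PT -(probability_setT P).
Qed.

End LipschitzOfRandomVector.

Lemma sup_argmax (R : realType) m (Y : set 'rV[R]_m) (F : 'rV[R]_m -> R) y :
  is_argmax Y F y -> sup [set F y' | y' in Y] = F y.
Proof.
move=> [Yy y_max]; apply/le_anti/andP; split.
  by apply: ge_sup; [exists (F y), y | move=> _ [y' Yy' <-]; exact: y_max].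
by apply: ub_le_sup; [exists (F y) => _ [y' Yy' <-]; exact: y_max | exists y].
Qed.

Section Estimates.
Variables (R : realType) (n m d : nat) (l : 'rV[R]_n -> 'rV[R]_m -> 'rV[R]_d -> R)
  (psi : 'rV[R]_n -> 'rV[R]_d) (Y : set 'rV[R]_m) (ell1 L1 L0 mu : R)
  (dT : measure_display) (T : measurableType dT) (P : probability T R)
  (eps : T -> 'rV[R]_d).
Hypotheses (l_smooth : smooth_l l ell1) (l_lip : lipschitz_l l L1)
  (psi_lip : lipschitz_psi psi L0) (Y_convex : convex_set Y) (mu_gt0 : 0 < mu)
  (l_sc : strongly_concave_l l Y mu)
  (eps_meas : forall j : 'I_d, measurable_fun setT (fun w => eps w 0 j))
  (eps_bounded : exists K : set 'rV[R]_d, compact K /\ {ae P, forall w, K (eps w)}).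
Variables (xhat : 'rV[R]_n) (delta : R) (N : nat) (xs : 'I_N -> 'rV[R]_n)
  (es : 'I_N -> 'rV[R]_d) (B0 : 'M[R]_(1, d)) (B1 : 'M[R]_(n, d)) (x : 'rV[R]_n).
Hypotheses (delta_gt0 : 0 < delta) (N_gt0 : (0 < N)%N)
  (xs_ball : forall i, eball xhat delta (xs i)) (x_ball : eball xhat delta x).

Local Notation Ekv := (Ek psi B0 B1 xhat delta).
Let c := Num.max ell1 0.

Lemma gradY_lipY x' z y y' :
  enorm (gradY l x' y z - gradY l x' y' z) <= c * enorm (y - y').
Proof.
have := l_smooth.2 x' y z x' y' z; rewrite !subrr enorm3_0y0.
move=> /(le_trans (enorm_le_enorm3 _ _ _)) /le_trans; apply.
by rewrite ler_wpM2r ?enorm_ge0 // le_max lexx.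
Qed.

Lemma gradY_lipZ x' y z z' :
  enorm (gradY l x' y z - gradY l x' y z') <= ell1 * enorm (z - z').
Proof.
have := l_smooth.2 x' y z x' y z'; rewrite !subrr enorm3_00z.
exact: le_trans (enorm_le_enorm3 _ _ _).
Qed.

Lemma l_lipY x' y y' z : `|l x' y z - l x' y' z| <= L1 * enorm (y - y').
Proof. by have := l_lip x' y z x' y' z; rewrite !subrr enorm3_0y0. Qed.

Lemma l_lipZ x' y z z' : `|l x' y z - l x' y z'| <= L1 * enorm (z - z').
Proof. by have := l_lip x' y z x' y z'; rewrite !subrr enorm3_00z. Qed.

Lemma taylor_l z : taylor_bounded (fun y => l x y z) (fun y => gradY l x y z) c.
Proof.
apply: taylor_gradY; first exact: l_smooth.1.
  by rewrite le_max lexx orbT.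
exact: gradY_lipY.
Qed.

Lemma Ek_ubound : has_ubound [set enorm (psi z - z *m B1 - B0) | z in eball xhat delta].
Proof.
exists (`|L0| * delta + enorm (psi xhat)
        + (delta + enorm xhat) * \sum_(k < d) \sum_(i < n) `|B1 i k| + enorm B0).
move=> _ [z z_ball <-]; rewrite /eball /= in z_ball.
apply: (le_trans (ler_enormB _ _)); rewrite lerD2r.
apply: (le_trans (ler_enormB _ _)); apply: lerD.
  rewrite -[psi z](subrK (psi xhat)); apply: (le_trans (ler_enormD _ _)); rewrite lerD2r.
  apply: (le_trans (psi_lip z xhat)).
  by apply: (le_trans (ler_wpM2r (enorm_ge0 _) (ler_norm L0))); exact: ler_wpM2l.
apply: (le_trans (enorm_le_sum_abs _)); rewrite mulr_sumr; apply: ler_sum => k _.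
rewrite mxE; apply: (le_trans (ler_norm_sum _ _ _)); rewrite mulr_sumr.
apply: ler_sum => i _; rewrite normrM ler_wpM2r //.
apply: (le_trans (abs_le_enorm _ _)); rewrite -[z](subrK xhat).
by apply: (le_trans (ler_enormD _ _)); exact: lerD.
Qed.

Lemma model_error_le_Ek z : eball xhat delta z -> enorm (psi z - z *m B1 - B0) <= Ekv.
Proof. by move=> z_ball; apply: ub_le_sup Ek_ubound _ _; exists z. Qed.

Lemma Ek_rV0 : (forall v : 'rV[R]_d, v = 0) -> Ekv = 0.
Proof.
move=> d0; have xhat_ball : eball xhat delta xhat by rewrite /eball /= subrr enorm0 ltW.
apply/le_anti/andP; split; last by rewrite (le_trans (enorm_ge0 _) (model_error_le_Ek xhat_ball)).
apply: ge_sup; first by exists (enorm (psi xhat - xhat *m B1 - B0)), xhat.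
by move=> _ [z _ <-]; rewrite (d0 (_ - _)) enorm0.
Qed.

Let zs i := psi x + es i.
Let zk i := mk B0 B1 x (resid psi xs es B0 B1 i).

Lemma sample_shift_le i : enorm (zk i - zs i) <= 2 * Ekv.
Proof.
have -> : zk i - zs i = (psi (xs i) - xs i *m B1 - B0) - (psi x - x *m B1 - B0).
  by apply/rowP => j; rewrite /zk /zs /mk /resid /omega !mxE; ring.
apply: (le_trans (ler_enormB _ _)); rewrite mulr2n mulrDl mul1r.
by apply: lerD; exact: model_error_le_Ek.
Qed.

(* A coefficient [a] that is negative can only multiply norms in the trivial space,
   where the model error vanishes. *)
Lemma mul_sample_shift_le (a : R) i : (forall u : 'rV[R]_d, 0 <= a * enorm u) ->
  a * enorm (zk i - zs i) <= a * (2 * Ekv).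
Proof.
move=> a_enorm; have [a0|a0] := leP 0 a; first by rewrite ler_wpM2l // sample_shift_le.
have d0 := rV_eq0_of_neg_bound a0 a_enorm.
by rewrite (d0 (_ - _)) (Ek_rV0 d0) enorm0 !mulr0.
Qed.

Definition Gs y := avgv (fun i => gradY l x y (zs i)).
Definition Gk y := avgv (fun i => gradY l x y (zk i)).
Definition Gpop y := Exv P (fun w => gradY l x y (psi x + eps w)).

Lemma taylor_Ls : taylor_bounded (Ls l psi es x) Gs c.
Proof. exact (taylor_avgr N_gt0 (fun i => taylor_l (zs i))). Qed.

Lemma taylor_Lk : taylor_bounded (Lk l psi xs es B0 B1 x) Gk c.
Proof. exact (taylor_avgr N_gt0 (fun i => taylor_l (zk i))). Qed.

Lemma concave_Ls : strongly_concave_on Y mu (Ls l psi es x).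
Proof. exact (strongly_concave_avgr N_gt0 (fun i => l_sc x (zs i))). Qed.

Lemma concave_Lk : strongly_concave_on Y mu (Lk l psi xs es B0 B1 x).
Proof. exact (strongly_concave_avgr N_gt0 (fun i => l_sc x (zk i))). Qed.

Lemma taylor_Lpop : taylor_bounded (Lpop l psi P eps x) Gpop c.
Proof.
have shiftB (u v : 'rV[R]_d) : (psi x + u) - (psi x + v) = u - v.
  by rewrite opprD addrACA subrr add0r.
apply: (taylor_Ex (F := fun w y => l x y (psi x + eps w))) => [y|y j|w].
- apply: (integrable_lipschitz eps_meas eps_bounded
    (F := fun v => l x y (psi x + v)) (C := L1)) => u v.
  by rewrite -shiftB; exact: l_lipZ.
- apply: (integrable_lipschitz eps_meas eps_bounded
    (F := fun v => gradY l x y (psi x + v) 0 j) (C := ell1)) => u v.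
  have := abs_le_enorm (gradY l x y (psi x + u) - gradY l x y (psi x + v)) j.
  by rewrite !mxE => /le_trans; apply; rewrite -shiftB; exact: gradY_lipZ.
- exact: taylor_l.
Qed.

Variables (ystar ys yk : 'rV[R]_m).
Hypotheses (ystar_max : is_argmax Y (Lpop l psi P eps x) ystar)
  (ys_max : is_argmax Y (Ls l psi es x) ys)
  (yk_max : is_argmax Y (Lk l psi xs es B0 B1 x) yk).

Lemma dist_argmax_pop_saa : enorm (ystar - ys) <= mu^-1 * enorm (xi l psi es P eps x ystar).
Proof.
rewrite enorm_distC -(ler_pM2l mu_gt0) mulrA mulfV ?gt_eqF // mul1r.
exact: (argmax_dist_le Y_convex taylor_Ls concave_Ls taylor_Lpop ys_max ystar_max).
Qed.

Lemma grad_gap_le y : enorm (Gk y - Gs y) <= ell1 * (2 * Ekv).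
Proof.
rewrite /Gk /Gs avgvB; apply: enorm_avgv_le => // i.
apply: le_trans (gradY_lipZ _ _ _ _) _; apply: mul_sample_shift_le => u.
by apply: le_trans (enorm_ge0 _) (le_trans (gradY_lipZ x y u 0) _); rewrite subr0.
Qed.

Lemma dist_argmax_model_saa : enorm (yk - ys) <= 2 * ell1 / mu * Ekv.
Proof.
have := argmax_dist_le Y_convex taylor_Lk concave_Lk taylor_Ls yk_max ys_max.
move=> /le_trans /(_ (grad_gap_le ys)) gap.
rewrite -(ler_pM2l mu_gt0) (_ : mu * (2 * ell1 / mu * Ekv) = ell1 * (2 * Ekv)) //.
by field; rewrite gt_eqF.
Qed.

Lemma Ls_lip a b : `|Ls l psi es x a - Ls l psi es x b| <= L1 * enorm (a - b).
Proof.
rewrite (_ : _ - _ = avgr (fun i => l x a (zs i) - l x b (zs i))); last by rewrite -avgrB.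
by apply: normr_avgr_le => // i; exact: l_lipY.
Qed.

Lemma Ls_Lk_le y : `|Ls l psi es x y - Lk l psi xs es B0 B1 x y| <= L1 * (2 * Ekv).
Proof.
rewrite (_ : _ - _ = avgr (fun i => l x y (zs i) - l x y (zk i))); last by rewrite -avgrB.
apply: normr_avgr_le => // i.
apply: le_trans (l_lipZ _ _ _ _) _; rewrite enorm_distC; apply: mul_sample_shift_le => u.
by apply: le_trans (normr_ge0 _) (le_trans (l_lipZ x y u 0) _); rewrite subr0.
Qed.

Lemma Phi_Phik_gap_le :
  `|Phi l psi Y P eps x - Phik l psi Y xs es B0 B1 x|
    <= `|tau l psi es P eps x ystar| + L1 / mu * enorm (xi l psi es P eps x ystar)
       + 2 * L1 * (1 + ell1 / mu) * Ekv.
Proof.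
rewrite /Phi /Phik (sup_argmax ystar_max) (sup_argmax yk_max) /tau.
set A := Lpop _ _ _ _ _ _; set S := Ls l psi es x; set K := Lk _ _ _ _ _ _ _.
have tri : `|A - K yk| <= `|A - S ystar| + L1 * enorm (ystar - ys)
                          + L1 * enorm (ys - yk) + L1 * (2 * Ekv).
  rewrite (_ : A - K yk = (A - S ystar) + (S ystar - S ys) + (S ys - S yk) + (S yk - K yk));
    last by ring.
  apply: (le_trans (ler_normD _ _)); apply: lerD; last exact: Ls_Lk_le.
  apply: (le_trans (ler_normD _ _)); apply: lerD; last exact: Ls_lip.
  by apply: (le_trans (ler_normD _ _)); apply: lerD => //; exact: Ls_lip.
have [L1_ge0|L1_lt0] := leP 0 L1.
  have := ler_wpM2l L1_ge0 dist_argmax_pop_saa.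
  have := ler_wpM2l L1_ge0 dist_argmax_model_saa; rewrite enorm_distC.
  have -> : L1 / mu * enorm (xi l psi es P eps x ystar) =
            L1 * (mu^-1 * enorm (xi l psi es P eps x ystar)) by ring.
  have -> : 2 * L1 * (1 + ell1 / mu) * Ekv = L1 * (2 * ell1 / mu * Ekv) + L1 * (2 * Ekv).
    by ring.
  lra.
(* A negative Lipschitz constant forces both the y- and the z-space to be trivial. *)
have m0 : forall u : 'rV[R]_m, u = 0.
  apply: (rV_eq0_of_neg_bound L1_lt0) => u.
  by apply: le_trans (normr_ge0 _) (le_trans (l_lipY x u 0 (psi x)) _); rewrite subr0.
have d0 : forall u : 'rV[R]_d, u = 0.
  apply: (rV_eq0_of_neg_bound L1_lt0) => u.
  by apply: le_trans (normr_ge0 _) (le_trans (l_lipZ x ystar u 0) _); rewrite subr0.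
move: tri; rewrite (m0 (xi _ _ _ _ _ _ _)) (m0 (ystar - ys)) (m0 (ys - yk)) (Ek_rV0 d0).
by rewrite enorm0 !mulr0 !addr0.
Qed.

End Estimates.

Theorem mainTheorem5 (R : realType) (n m d : nat)
  (l : 'rV[R]_n -> 'rV[R]_m -> 'rV[R]_d -> R) (psi : 'rV[R]_n -> 'rV[R]_d)
  (Y : set 'rV[R]_m) (ell1 L1 ell0 L0 mu : R)
  (dT : measure_display) (T : measurableType dT) (P : probability T R)
  (eps : T -> 'rV[R]_d) :
  smooth_l l ell1 -> lipschitz_l l L1 ->
  twice_differentiable psi -> smooth_psi psi ell0 -> lipschitz_psi psi L0 ->
  Y !=set0 -> closed Y -> convex_set Y -> bounded_set Y ->
  0 < mu -> strongly_concave_l l Y mu ->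
  random_vector_cs0 P eps ->
  forall (xhat : 'rV[R]_n) (delta : R) (N : nat)
         (xs : 'I_N -> 'rV[R]_n) (es : 'I_N -> 'rV[R]_d)
         (B0 : 'M[R]_(1, d)) (B1 : 'M[R]_(n, d)),
  0 < delta -> (0 < N)%N ->
  (forall i, eball xhat delta (xs i)) ->
  is_lsq psi xs es B0 B1 ->
  forall x : 'rV[R]_n, eball xhat delta x ->
  forall ystar ys yk : 'rV[R]_m,
    is_argmax Y (Lpop l psi P eps x) ystar ->
    is_argmax Y (Ls l psi es x) ys ->
    is_argmax Y (Lk l psi xs es B0 B1 x) yk ->
  [/\ enorm (ystar - ys) <= mu^-1 * enorm (xi l psi es P eps x ystar),
      enorm (yk - ys) <= 2 * ell1 / mu * Ek psi B0 B1 xhat delta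
    & `|Phi l psi Y P eps x - Phik l psi Y xs es B0 B1 x|
        <= `|tau l psi es P eps x ystar|
           + L1 / mu * enorm (xi l psi es P eps x ystar)
           + 2 * L1 * (1 + ell1 / mu) * Ek psi B0 B1 xhat delta].
Proof.
move=> l_smooth l_lip _ _ psi_lip _ _ Y_convex _ mu_gt0 l_sc [eps_meas [eps_bounded _]]
  xhat delta N xs es B0 B1 delta_gt0 N_gt0 xs_ball _ x x_ball ystar ys yk
  ystar_max ys_max yk_max.
split.
- exact: (dist_argmax_pop_saa l_smooth l_lip Y_convex mu_gt0 l_sc eps_meas eps_bounded N_gt0
    ystar_max ys_max).
- exact: (dist_argmax_model_saa l_smooth psi_lip Y_convex mu_gt0 l_sc delta_gt0 N_gt0 xs_ball
    x_ball ys_max yk_max).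
- exact: (Phi_Phik_gap_le l_smooth l_lip psi_lip Y_convex mu_gt0 l_sc eps_meas eps_bounded
    delta_gt0 N_gt0 xs_ball x_ball ystar_max ys_max yk_max).
Qed.
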